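(* Let $k\ge1$. For all $\ell$ with $k<\ell\le n+1$ and all $r\in\{0,1,\dots,k\}$, $$\mathbb{E}[v(\mathrm{ALG}^{\ge\ell}_r)]\ \ge\ \sum_{j=\ell}^{n}\frac{a_{\ell,j-1}}{j}\,\mathbb{E}[v(\mathcal{A}(U^{\le j}))]\sum_{r'=0}^{r-1}\ \sum_{\substack{M\subseteq\{\ell,\dots,j-1\}\\|M|=r'}}\ \prod_{i\in M}\frac{k-1}{i},$$ where $a_{\ell,j-1}=\prod_{i=\ell}^{j-1}\left(1-\frac{k}{i}\right)$ (an empty product equals $1$).
   Context: Let $U$ be a finite ground set of $n$ items and $k\ge1$ an integer. Let $v\colon 2^U\to\mathbb{R}_{\ge0}$ be monotone and submodular. The items arrive one per round (rounds $1,\dots,n$) in a uniformly random order; $U^{\le \ell}$ denotes the set of items arriving in rounds $1,\dots,\ell$. $\mathcal{A}$ is an offline algorithm that, for every $L\subseteq U$, returns a set $\mathcal{A}(L)\subseteq L$ with $|\mathcal{A}(L)|\le k$, depending only on the set $L$ (e.g. an $\alpha$-approximation for $\max\{v(T):T\subseteq L,|T|\le k\}$). Random sets $\mathrm{ALG}^{\ge\ell}_r\subseteq U$ for $\ell\in\{1,\dots,n+1\}$, $r\in\{0,\dots,k\}$ are defined recursively: $\mathrm{ALG}^{\ge\ell}_0=\emptyset$ for all $\ell$, $\mathrm{ALG}^{\ge n+1}_r=\emptyset$ for all $r$, and for $\ell\in[n]$, $r\ge1$, letting $j$ be the item arriving in round $\ell$: $\mathrm{ALG}^{\ge\ell}_r=\{j\}\cup\mathrm{ALG}^{\ge\ell+1}_{r-1}$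 if $j\in\mathcal{A}(U^{\le\ell})$, and $\mathrm{ALG}^{\ge\ell}_r=\mathrm{ALG}^{\ge\ell+1}_{r}$ otherwise. *)

From HB Require Import structures.
From mathcomp Require Import all_boot all_order all_algebra.
Set Implicit Arguments. Unset Strict Implicit. Unset Printing Implicit Defensive.
Import Order.TTheory GRing.Theory Num.Theory.
Local Open Scope ring_scope.

Section Defs.
Variable U : finType.

(* An arrival order is a sequence s listing every item of U exactly once;
   the item arriving in round l (1-indexed) is the (l-1)-th entry of s. *)
Definition orders : seq (seq U) := permutations (enum U).

Definition prefix_set (s : seq U) (l : nat) : {set U} := [set x in take l s].

Definition Exp (R : numFieldType) (f : seq U -> R) : R :=
  (\sum_(s <- orders) f s) / (size orders)%:R.

(* algrec A pre rest r computes ALG^{>= l}_r where pre = items of rounds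
   1..l-1 and rest = items of rounds l..n (in order). *)
Fixpoint algrec (A : {set U} -> {set U}) (pre rest : seq U) (r : nat)
  : {set U} :=
  match rest, r with
  | [::], _ => set0
  | _, 0%N => set0
  | j :: rest', r'.+1 =>
      if j \in A [set x in rcons pre j]
      then j |: algrec A (rcons pre j) rest' r'
      else algrec A (rcons pre j) rest' r'.+1
  end.

Definition ALG (A : {set U} -> {set U}) (s : seq U) (l r : nat) : {set U} :=
  algrec A (take l.-1 s) (drop l.-1 s) r.

End Defs.

From HB Require Import structures.
From mathcomp Require Import all_boot all_order all_algebra.
From mathcomp Require Import zify ring lra.
Import Order.TTheory GRing.Theory Num.Theory.
Local Open Scope ring_scope.
Set Implicit Arguments. Unset Strict Implicit. Unset Printing Implicit Defensive.

(** Rotating the first [l] rounds of an arrival order is a bijection on orders that fixes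
    [U^{<= l}] and all later rounds, and makes each item of [U^{<= l}] arrive in round [l]
    once. Averaging over these rotations, the item of round [l] is taken exactly when it lies
    in [B = A(U^{<= l})], and submodularity gives
    [sum_(x in B) v(x + S') >= v B + (|B| - 1) v S'] for [S' = ALG^{>= l+1}_r]. Since
    [|B| <= k] and [S' <= S = ALG^{>= l+1}_{r+1}], this yields the one-round recurrence
    [E v(ALG^{>= l}_{r+1}) >= (1 - k/l) E v(ALG^{>= l+1}_{r+1}) + (k-1)/l E v(ALG^{>= l+1}_r)
       + E v(A(U^{<= l})) / l].
    Splitting the elementary symmetric sums of the weights [(k-1)/i] on the index [l] shows
    that the claimed bound satisfies the same recurrence, up to an extra factor [1 - k/l] in
    front of the second term; as [l > k] all coefficients are nonnegative, and downward
    induction on [l] concludes. *)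

Section ArrivalOrders.
Variable U : finType.

Lemma mem_orders (s : seq U) : (s \in orders U) = perm_eq s (enum U).
Proof. exact: mem_permutations. Qed.

Lemma orders_uniq_size (s : seq U) : s \in orders U -> uniq s /\ size s = #|U|.
Proof.
by rewrite mem_orders => s_perm; rewrite (perm_uniq s_perm) (perm_size s_perm) enum_uniq cardE.
Qed.

Lemma size_orders_gt0 : (0 < size (orders U))%N.
Proof. by rewrite size_permutations ?enum_uniq ?fact_gt0. Qed.

Lemma sum_orders_inj (R : nmodType) (g : seq U -> seq U) (f : seq U -> R) :
  injective g -> (forall s, perm_eq (g s) s) ->
  \sum_(s <- orders U) f (g s) = \sum_(s <- orders U) f s.
Proof.
move=> g_inj perm_g; rewrite -(big_map g xpredT).
have uniq_map : uniq (map g (orders U)) by rewrite map_inj_uniq ?permutations_uniq.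
have sub_map : {subset map g (orders U) <= orders U}.
  by move=> _ /mapP[s s_in ->]; rewrite mem_orders (perm_trans (perm_g s)) -?mem_orders.
have [_ eq_map] := uniq_min_size uniq_map sub_map (eq_leq (esym (size_map _ _))).
by apply/perm_big/uniq_perm; rewrite ?permutations_uniq.
Qed.

Definition rot_prefix (m l : nat) (s : seq U) := rot m (take l s) ++ drop l s.

Lemma take_drop_rot_prefix m l s :
  take l (rot_prefix m l s) = rot m (take l s) /\ drop l (rot_prefix m l s) = drop l s.
Proof.
have size_rt : (size (rot m (take l s)) <= l)%N by rewrite size_rot size_take_min geq_minl.
rewrite /rot_prefix; have [l_le|s_lt] := leqP l (size s).
  have size_l : size (rot m (take l s)) = l by rewrite size_rot size_takel.
  by rewrite take_size_cat // drop_size_cat.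
by rewrite [drop l s]drop_oversize ?(ltnW s_lt) // cats0 take_oversize ?drop_oversize.
Qed.

Lemma rot_prefix_inj m l : injective (rot_prefix m l).
Proof.
move=> s1 s2 eq_s; have [take1 drop1] := take_drop_rot_prefix m l s1.
have [take2 drop2] := take_drop_rot_prefix m l s2.
rewrite -(cat_take_drop l s1) -(cat_take_drop l s2) -drop1 -drop2 eq_s.
by congr (_ ++ _); apply: (@rot_inj m); rewrite -take1 -take2 eq_s.
Qed.

Lemma perm_rot_prefix m l s : perm_eq (rot_prefix m l s) s.
Proof. by rewrite -[X in perm_eq _ X](cat_take_drop l s) perm_cat2r perm_rot. Qed.

Lemma Exp_ge0 (R : numFieldType) (f : seq U -> R) : (forall s, 0 <= f s) -> 0 <= Exp f.
Proof. by move=> f_ge0; rewrite /Exp divr_ge0 ?sumr_ge0. Qed.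

Variable A : {set U} -> {set U}.

Lemma algrec_eq_set rest (pre1 pre2 : seq U) r :
  [set x in pre1] = [set x in pre2] -> algrec A pre1 rest r = algrec A pre2 rest r.
Proof.
elim: rest pre1 pre2 r => [|j rest IH] pre1 pre2 [|r] eq_pre //=.
have eq_pre' : [set x in rcons pre1 j] = [set x in rcons pre2 j].
  apply/setP => y; move/setP/(_ y): eq_pre.
  by rewrite !inE !mem_rcons !in_cons => ->.
by rewrite eq_pre' !(IH _ _ _ eq_pre').
Qed.

Lemma algrec_subset_succ rest (pre : seq U) r :
  algrec A pre rest r \subset algrec A pre rest r.+1.
Proof.
elim: rest pre r => [|j rest IH] pre [|r] /=; rewrite ?sub0set //.
by case: ifP => _; [apply: setUS |]; apply: IH.
Qed.

Lemma ALG_rcons (p d : seq U) x r :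
  ALG A (rcons p x ++ d) (size p).+1 r.+1 =
  if x \in A [set y in rcons p x] then x |: algrec A (rcons p x) d r
  else algrec A (rcons p x) d r.+1.
Proof. by rewrite /ALG /= cat_rcons take_size_cat // drop_size_cat. Qed.

Lemma sum_ALG_rot_prefix (R : nmodType) (F : {set U} -> R) (x0 : U) s l r :
  uniq s -> (l <= size s)%N ->
  \sum_(i < l) F (ALG A (rot_prefix i.+1 l s) l r.+1) =
  \sum_(x in [set y in take l s])
     F (if x \in A [set y in take l s] then x |: algrec A (take l s) (drop l s) r
        else algrec A (take l s) (drop l s) r.+1).
Proof.
move=> s_uniq l_le; set t := take l s; set d := drop l s.
have size_t : size t = l by rewrite size_takel.
pose step x := F (if x \in A [set y in t] then x |: algrec A t d r else algrec A t d r.+1).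
transitivity (\sum_(i < l) step (nth x0 t i)).
  apply: eq_bigr => i _; have i_lt : (i < size t)%N by rewrite size_t.
  set p := drop i.+1 t ++ take i t.
  have rot_t : rot i.+1 t = rcons p (nth x0 t i).
    by rewrite /rot (take_nth x0 i_lt) rcons_cat.
  have size_p : (size p).+1 = l by rewrite -(size_rcons p (nth x0 t i)) -rot_t size_rot.
  have set_p : [set y in rcons p (nth x0 t i)] = [set y in t].
    by apply/setP => y; rewrite !inE -rot_t mem_rot.
  rewrite /rot_prefix -/t -/d rot_t -{2}size_p ALG_rcons set_p.
  by rewrite /step !(algrec_eq_set _ _ set_p).
rewrite -(big_mkord xpredT (fun i => step (nth x0 t i))) -size_t -(big_nth x0 xpredT step).
by rewrite big_uniq ?take_uniq //; apply: eq_bigl => x; rewrite inE.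
Qed.

End ArrivalOrders.

Section Submodular.
Variables (R : realDomainType) (T : finType) (v : {set T} -> R).
Hypothesis v_mono : forall S S' : {set T}, S \subset S' -> v S <= v S'.
Hypothesis v_submod : forall S S' : {set T}, v (S :|: S') + v (S :&: S') <= v S + v S'.

Lemma submod_gains (S : {set T}) (e : seq T) :
  v ([set x in e] :|: S) - v S <= \sum_(x <- e) (v (x |: S) - v S).
Proof.
elim: e => [|x e IH]; first by rewrite big_nil set_nil set0U subrr.
have split_xe : [set y in x :: e] :|: S = (x |: S) :|: ([set y in e] :|: S).
  by apply/setP => y; rewrite !inE; case: (y == x); case: (y \in e); case: (y \in S).
have le_cap : v S <= v ((x |: S) :&: ([set y in e] :|: S)).
  by apply: v_mono; apply/subsetP => y yS; rewrite !inE yS !orbT.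
have := v_submod (x |: S) ([set y in e] :|: S).
by rewrite big_cons split_xe; lra.
Qed.

Lemma sum_branch_ge (k : nat) (L B S' S : {set T}) :
  B \subset L -> S' \subset S -> (#|B| <= k)%N ->
  (#|L|%:R - k%:R) * v S + (k%:R - 1) * v S' + v B <=
  \sum_(x in L) v (if x \in B then x |: S' else S).
Proof.
move=> BL S'S Bk.
have gains := submod_gains S' (enum B); rewrite set_enum big_enum /= in gains.
have vB : v B <= v (B :|: S') by apply/v_mono/subsetUl.
have vS' : v S' <= v S by apply: v_mono.
have card_LB : #|L :\: B| = (#|L| - #|B|)%N by rewrite cardsD (setIidPr BL).
have le_k : (v S - v S') * #|B|%:R <= (v S - v S') * k%:R.
  by rewrite ler_wpM2l ?subr_ge0 ?ler_nat.
rewrite (big_setID B) /= (setIidPr BL).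
rewrite (eq_bigr (fun x => v (x |: S'))) => [|x -> //].
rewrite [X in _ <= _ + X](eq_bigr (fun=> v S)) => [|x]; last first.
  by rewrite in_setD => /andP[/negbTE ->].
rewrite sumr_const card_LB -[v S *+ _]mulr_natr natrB ?subset_leq_card //.
rewrite sumrB sumr_const -mulr_natr in gains; lra.
Qed.

End Submodular.

Lemma subsetU1_notin (T : finType) (x : T) (M S : {set T}) :
  x \notin M -> (M \subset x |: S) = (M \subset S).
Proof.
move=> xM; apply/idP/idP => [subM|subMS]; last exact: subset_trans subMS (subsetU1 x S).
apply/subsetP => y yM; have /setU1P[eq_yx|//] := subsetP subM y yM.
by move: xM; rewrite -eq_yx yM.
Qed.

Section ElementarySymmetric.
Variables (R : comPzSemiRingType) (T : finType) (w : T -> R).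

Definition esym_on (S : {set T}) (m : nat) : R :=
  \sum_(M : {set T} | (M \subset S) && (#|M| == m)) \prod_(i in M) w i.

Definition esym_upto (S : {set T}) (r : nat) : R := \sum_(m < r) esym_on S m.

Lemma esym_on_set0 m : esym_on set0 m = (m == 0)%:R.
Proof.
rewrite /esym_on; case: m => [|m].
  by rewrite (big_pred1 set0) ?big_set0 // => M; rewrite subset0 cards_eq0 andbb.
rewrite big_pred0 // => M; rewrite subset0.
by case: eqP => [->|]; rewrite ?cards0.
Qed.

Lemma esym_onU1 (x : T) (S : {set T}) m : x \notin S ->
  esym_on (x |: S) m = esym_on S m + (if m is m'.+1 then w x * esym_on S m' else 0).
Proof.
move=> xS; have notsub (M : {set T}) : x \in M -> (M \subset S) = false.
  by move=> xM; apply/negbTE/subsetPn; exists x.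
rewrite /esym_on (bigID (fun M : {set T} => x \in M)) /= addrC; congr (_ + _).
  apply: eq_bigl => M; case xM: (x \in M); rewrite /= ?andbF ?andbT.
    by rewrite notsub.
  by rewrite subsetU1_notin ?xM.
case: m => [|m].
  rewrite big_pred0 // => M; apply/negbTE/andP => -[/andP[_]].
  by rewrite cards_eq0 => /eqP ->; rewrite inE.
rewrite (reindex_onto (fun M => x |: M) (fun M => M :\ x)) /=; last first.
  by move=> M /andP[_ xM]; rewrite setD1K.
rewrite mulr_sumr; apply: eq_big => M.
  case xM: (x \in M).
    have ne : (x |: M) :\ x != M by apply/eqP => eq_M; move: xM; rewrite -eq_M setD11.
    by rewrite (negbTE ne) andbF notsub.
  rewrite setU1K ?xM // eqxx andbT setU11 andbT cardsU1 xM /= add1n eqSS.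
  by rewrite subUset sub1set setU11 /= subsetU1_notin ?xM.
move=> /andP[_ /eqP eq_M]; have xM : x \notin M by rewrite -eq_M setD11.
by rewrite big_setU1.
Qed.

Lemma esym_upto_set0 r : esym_upto set0 r.+1 = 1.
Proof.
rewrite /esym_upto big_ord_recl esym_on_set0 big1 ?addr0 // => i _.
by rewrite esym_on_set0 lift0.
Qed.

Lemma esym_uptoU1 (x : T) (S : {set T}) r : x \notin S ->
  esym_upto (x |: S) r.+1 = esym_upto S r.+1 + w x * esym_upto S r.
Proof.
move=> xS; rewrite /esym_upto !big_ord_recl esym_onU1 // addr0.
under eq_bigr => i _ do rewrite esym_onU1 // lift0.
by rewrite big_split /= -mulr_sumr addrA.
Qed.

End ElementarySymmetric.

Section OneRound.
Variables (R : realFieldType) (U : finType) (k : nat) (v : {set U} -> R)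
  (A : {set U} -> {set U}).
Hypothesis v_mono : forall S S' : {set U}, S \subset S' -> v S <= v S'.
Hypothesis v_submod : forall S S' : {set U}, v (S :|: S') + v (S :&: S') <= v S + v S'.
Hypothesis A_sub : forall L : {set U}, A L \subset L.
Hypothesis A_card : forall L, (#|A L| <= k)%N.

Lemma sum_ALG_step (x0 : U) l r : (l <= #|U|)%N ->
  (l%:R - k%:R) * \sum_(s <- orders U) v (ALG A s l.+1 r.+1)
  + (k%:R - 1) * \sum_(s <- orders U) v (ALG A s l.+1 r)
  + \sum_(s <- orders U) v (A (prefix_set s l))
  <= l%:R * \sum_(s <- orders U) v (ALG A s l r.+1).
Proof.
move=> l_le.
have -> : l%:R * \sum_(s <- orders U) v (ALG A s l r.+1) =
    \sum_(s <- orders U) \sum_(i < l) v (ALG A (rot_prefix i.+1 l s) l r.+1).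
  rewrite [RHS]exchange_big /= [RHS](eq_bigr (fun=> \sum_(s <- orders U) v (ALG A s l r.+1))).
    by rewrite sumr_const card_ord mulr_natl.
  move=> i _; apply: (sum_orders_inj (fun s => v (ALG A s l r.+1))).
    exact: rot_prefix_inj.
  exact: perm_rot_prefix.
rewrite !mulr_sumr -!big_split /= big_seq [X in _ <= X]big_seq; apply: ler_sum => s s_in.
have [s_uniq size_s] := orders_uniq_size s_in.
rewrite (sum_ALG_rot_prefix A v x0 r s_uniq) ?size_s //.
have card_prefix : #|[set y in take l s]| = l.
  by rewrite cardsE (card_uniqP (take_uniq l s_uniq)) size_takel ?size_s.
rewrite -{1}card_prefix; apply: sum_branch_ge => //; exact: algrec_subset_succ.
Qed.

Lemma Exp_ALG_step l r : (1 <= k)%N -> (0 < l <= #|U|)%N ->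
  (1 - k%:R / l%:R) * Exp (fun s => v (ALG A s l.+1 r.+1))
  + ((k - 1)%:R / l%:R) * Exp (fun s => v (ALG A s l.+1 r))
  + Exp (fun s => v (A (prefix_set s l))) / l%:R
  <= Exp (fun s => v (ALG A s l r.+1)).
Proof.
move=> k_gt0 /andP[l_gt0 l_le].
have [x0 _] : exists x0 : U, x0 \in U by apply/card_gt0P; exact: leq_trans l_gt0 l_le.
have := sum_ALG_step x0 r l_le; rewrite /Exp natrB //.
set X := \sum_(s <- _) v (ALG A s l r.+1); set Y := \sum_(s <- _) v (ALG A s l.+1 r.+1).
set Z := \sum_(s <- _) v (ALG A s l.+1 r); set W := \sum_(s <- _) v (A _).
have N_gt0 : 0 < (size (orders U))%:R :> R by rewrite ltr0n size_orders_gt0.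
have l_gt0' : 0 < l%:R :> R by rewrite ltr0n.
move=> step; rewrite -(ler_pM2r (mulr_gt0 l_gt0' N_gt0)).
rewrite [X in X <= _](_ : _ = (l%:R - k%:R) * Y + (k%:R - 1) * Z + W); last first.
  by field; rewrite !gt_eqF.
by rewrite [X in _ <= X](_ : _ = l%:R * X); last by field; rewrite gt_eqF.
Qed.

End OneRound.

Definition window (N l j : nat) : {set 'I_N} := [set i : 'I_N | (l <= i < j)%N].

Lemma window_id N l : window N l l = set0.
Proof. by apply/setP => i; rewrite !inE; apply/negbTE/andP; lia. Qed.

Lemma window_split N l j (lt_lN : (l < N)%N) : (l < j)%N ->
  window N l j = Ordinal lt_lN |: window N l.+1 j /\ Ordinal lt_lN \notin window N l.+1 j.
Proof.
move=> lt_lj; split; last by rewrite inE ltnn.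
apply/setP => i; rewrite !inE -val_eqE /=.
by case: eqVneq => [->|ne_il]; rewrite ?leqnn ?lt_lj // leq_eqVlt eq_sym (negbTE ne_il).
Qed.

Section LowerBound.
Variables (R : realFieldType) (U : finType) (k : nat) (v : {set U} -> R)
  (A : {set U} -> {set U}).

Definition lower_bound (l r : nat) : R :=
  \sum_(l <= j < #|U|.+1)
     ((\prod_(l <= i < j) (1 - k%:R / i%:R)) / j%:R)
     * Exp (fun s => v (A (prefix_set s j)))
     * esym_upto (fun i : 'I_#|U|.+1 => (k - 1)%:R / (i : nat)%:R) (window #|U|.+1 l j) r.

Lemma lower_bound0 l : lower_bound l 0 = 0.
Proof. by rewrite /lower_bound big1 // => j _; rewrite /esym_upto big_ord0 mulr0. Qed.

Lemma lower_bound_succ l r : (l <= #|U|)%N ->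
  lower_bound l r.+1 = Exp (fun s => v (A (prefix_set s l))) / l%:R
    + (1 - k%:R / l%:R) * (lower_bound l.+1 r.+1 + ((k - 1)%:R / l%:R) * lower_bound l.+1 r).
Proof.
move=> lt_lU; rewrite -ltnS in lt_lU.
rewrite /lower_bound big_ltn // big_geq // window_id esym_upto_set0.
rewrite div1r mulr1 mulrC; congr (_ + _).
rewrite [X in _ = _ * (_ + X)]mulr_sumr -big_split /= mulr_sumr.
apply: eq_big_nat => j /andP[lt_lj _]; have [-> notin_l] := window_split lt_lU lt_lj.
by rewrite esym_uptoU1 // big_ltn //=; ring.
Qed.

Hypothesis v_nonneg : forall S, 0 <= v S.
Hypothesis v_mono : forall S S' : {set U}, S \subset S' -> v S <= v S'.
Hypothesis v_submod : forall S S' : {set U}, v (S :|: S') + v (S :&: S') <= v S + v S'.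
Hypothesis A_sub : forall L : {set U}, A L \subset L.
Hypothesis A_card : forall L, (#|A L| <= k)%N.
Hypothesis k_gt0 : (0 < k)%N.

Lemma lower_bound_le_Exp l r : (k < l <= #|U|.+1)%N ->
  lower_bound l r <= Exp (fun s => v (ALG A s l r)).
Proof.
move=> /andP[]; move eq_d : (#|U|.+1 - l)%N => d.
elim: d l r eq_d => [|d IH] l r eq_d lt_kl le_l.
  have -> : l = #|U|.+1 by lia.
  by rewrite /lower_bound big_geq // Exp_ge0.
have l_le : (l <= #|U|)%N by lia.
case: r => [|r]; first by rewrite lower_bound0 Exp_ge0.
have IH_l1 r' : lower_bound l.+1 r' <= Exp (fun s => v (ALG A s l.+1 r')).
  by apply: IH; lia.
have a_ge0 : 0 <= 1 - k%:R / l%:R :> R.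
  by rewrite subr_ge0 ler_pdivrMr ?ltr0n ?(leq_ltn_trans _ lt_kl) // mul1r ler_nat ltnW.
have a_le1 : 1 - k%:R / l%:R <= 1 :> R by rewrite lerBlDr lerDl divr_ge0.
have b_ge0 : 0 <= (k - 1)%:R / l%:R :> R by rewrite divr_ge0.
have E_ge0 : 0 <= Exp (fun s => v (ALG A s l.+1 r)) by rewrite Exp_ge0.
have l_range : (0 < l <= #|U|)%N by rewrite l_le andbT; lia.
apply: le_trans (Exp_ALG_step v_mono v_submod A_sub A_card r k_gt0 l_range).
rewrite lower_bound_succ //.
have step1 := ler_wpM2l a_ge0 (IH_l1 r.+1).
have step2 : (1 - k%:R / l%:R) * ((k - 1)%:R / l%:R * lower_bound l.+1 r)
    <= (k - 1)%:R / l%:R * Exp (fun s => v (ALG A s l.+1 r)).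
  apply: le_trans (ler_piMl _ a_le1); last exact: mulr_ge0.
  by rewrite ler_wpM2l // ler_wpM2l.
lra.
Qed.

End LowerBound.

Theorem mainTheorem7 (R : realFieldType) (U : finType) (k : nat)
  (v : {set U} -> R) (A : {set U} -> {set U})
  (v_nonneg : forall S, 0 <= v S)
  (v_mono : forall S T : {set U}, S \subset T -> v S <= v T)
  (v_submod : forall S T : {set U}, v (S :|: T) + v (S :&: T) <= v S + v T)
  (A_sub : forall L : {set U}, A L \subset L)
  (A_card : forall L, (#|A L| <= k)%N)
  (hk : (1 <= k)%N) (l r : nat)
  (hl1 : (k < l)%N) (hl2 : (l <= #|U|.+1)%N) (hr : (r <= k)%N) :
  Exp (fun s => v (ALG A s l r)) >=
  \sum_(l <= j < #|U|.+1)
     ((\prod_(l <= i < j) (1 - k%:R / i%:R)) / j%:R)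
     * Exp (fun s => v (A (prefix_set s j)))
     * \sum_(r' < r)
         \sum_(M : {set 'I_#|U|.+1} |
                 (M \subset [set i : 'I_#|U|.+1 | (l <= i < j)%N])
                 && (#|M| == r'))
           \prod_(i in M) ((k - 1)%:R / (nat_of_ord i)%:R).
Proof.
by apply: (lower_bound_le_Exp v_nonneg v_mono v_submod A_sub A_card hk); rewrite hl1.
Qed.
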